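(* Let $n\neq 0,-1$ be an integer and $M=E_{T(2,2n+1)}\cup N(Kb)$ the graph manifold obtained by $4$-surgery along the $n$-twist knot $K_n$. For every irreducible representation $\bar\rho:\pi_1(M)\to SL(2,\mathbb{C})$, the restriction of $\bar\rho$ to $\pi_1(N(Kb))$ is irreducible.
   Context: The $n$-twist knot $K_n$ is the two-bridge knot whose group has the presentation $\pi_1(E_{K_n})=\langle \alpha,\beta\mid \omega^n\alpha=\beta\omega^n\rangle$ with $\alpha,\beta$ meridians and $\omega=\beta\alpha^{-1}\beta^{-1}\alpha$; its Alexander polynomial is $-nt^2+(2n+1)t-n$, and $K_1$ is the figure-eight knot. $N(Kb)$ is the twisted $I$-bundle over the Klein bottle, $E_{T(2,2n+1)}$ the exterior of the $(2,2n+1)$ torus knot. $M$ is the union of these along a torus, with $\pi_1(M)=\langle a,b,x,y\mid a^2=b^{2n+1},\ x^{-1}yx=y^{-1},\ \mu=y^{-1},\ h=y^{-1}x^2\rangle$, where $\pi_1(N(Kb))=\langle x,y\mid x^{-1}yx=y^{-1}\rangle$, $\mu=b^{-n}a$ is a meridian and $h$ a regular fiber of $E_{T(2,2n+1)}$. A representation is irreducible if the only subspaces of $\mathbb{C}^2$ invariant under its image are $\{0\}$ and $\mathbb{C}^2$. *)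

From HB Require Import structures.
From mathcomp Require Import all_boot all_order all_algebra.
From mathcomp Require Import complex reals.
Set Implicit Arguments. Unset Strict Implicit. Unset Printing Implicit Defensive.
Import Order.TTheory GRing.Theory Num.Theory.
Local Open Scope ring_scope.

Inductive gen_by {F : fieldType} (gs : seq 'M[F]_2) : 'M[F]_2 -> Prop :=
  | gen_one : gen_by gs 1
  | gen_gen g : g \in gs -> gen_by gs g
  | gen_inv g : gen_by gs g -> gen_by gs g^-1
  | gen_mul g h : gen_by gs g -> gen_by gs h -> gen_by gs (g * h).

(* A subgroup G of GL(2,F) is irreducible if the only subspaces W of F^2
   (column vectors) with g W <= W for all g in G are {0} and F^2.
   A subspace W is encoded as the row space of a matrix V whose rows are
   the transposes of spanning vectors of W; g W <= W becomes V g^T <= V. *)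
Definition irreducible_gen {F : fieldType} (gs : seq 'M[F]_2) : Prop :=
  forall V : 'M[F]_2,
    (forall g, gen_by gs g -> (V *m g^T <= V)%MS) ->
    \rank V = 0%N \/ \rank V = 2%N.

Definition SL2 {F : fieldType} (g : 'M[F]_2) : Prop := \det g = 1.

(* Images A,B,X,Y of a,b,x,y define a representation
   pi_1(M) -> SL(2,F), pi_1(M) = < a,b,x,y | a^2 = b^(2n+1), x^-1 y x = y^-1,
   mu = y^-1, h = y^-1 x^2 > with mu = b^-n a and h = a^2 (regular fiber). *)
Definition rep_M {F : fieldType} (n : int) (A B X Y : 'M[F]_2) : Prop :=
  [/\ SL2 A, SL2 B, SL2 X & SL2 Y] /\
  [/\ A ^+ 2 = B ^ (2 * n + 1),
      X^-1 * Y * X = Y^-1,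
      B ^ (- n) * A = Y^-1 &
      A ^+ 2 = Y^-1 * X ^+ 2].

From HB Require Import structures.
From mathcomp Require Import all_boot all_order all_algebra.
From mathcomp Require Import ring.
From mathcomp Require Import complex reals.

Set Implicit Arguments. Unset Strict Implicit. Unset Printing Implicit Defensive.
Import GRing.Theory.
Local Open Scope ring_scope.

(* Let V be a line invariant under X and Y.  Conjugating so that V is spanned by
   the first basis vector makes X and Y upper triangular.  The (1,1) entries of
   Y X = X Y^-1 give Y = y (1 + t E_12) with y^2 = 1.  If t = 0, then Y is central
   and the relations force B = 1 and A = y.  If t <> 0, the (1,2) entries of
   Y X = X Y^-1 give tr X = 0, hence X^2 = -1 and A^2 = Y^-1 X^2 = -Y^-1 is upper
   triangular with a non-zero (1,2) entry; A and B commute with A^2 = B^(2n+1)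
   and therefore preserve its only eigenline V.  In both cases V is invariant
   under A, B, X and Y, which contradicts irreducibility. *)

Section Conjugation.
Variables (R : unitRingType) (q : R).
Hypothesis q_unit : q \is a GRing.unit.

Definition conjr (x : R) := q^-1 * x * q.

Lemma conjr_is_zmod_morphism : zmod_morphism conjr.
Proof. by move=> x y; rewrite /conjr mulrBr mulrBl. Qed.

Lemma conjr_is_monoid_morphism : monoid_morphism conjr.
Proof. by split=> [|x y]; rewrite /conjr ?mulr1 ?mulVr // !mulrA mulrK. Qed.

HB.instance Definition _ :=
  GRing.isZmodMorphism.Build R R conjr conjr_is_zmod_morphism.
HB.instance Definition _ :=
  GRing.isMonoidMorphism.Build R R conjr conjr_is_monoid_morphism.

End Conjugation.

Lemma det_conjr (R : comUnitRingType) (k : nat) (Q g : 'M[R]_k.+1) :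
  Q \is a GRing.unit -> \det (conjr Q g) = \det g.
Proof.
by move=> Q_unit; rewrite /conjr -!mulmxE !det_mulmx det_inv mulrAC mulVr ?mul1r -?unitmxE.
Qed.

Section Matrix2.
Variable R : comNzRingType.
Implicit Types M N : 'M[R]_2.

Lemma mulmx2E M N i j : (M * N) i j = M i 0 * N 0 j + M i 1 * N 1 j.
Proof.
rewrite -mulmxE mxE !big_ord_recl big_ord0 addr0.
by congr (_ + M i _ * N _ j); apply/val_inj.
Qed.

Lemma det_mx2 M : \det M = M 0 0 * M 1 1 - M 0 1 * M 1 0.
Proof.
rewrite (expand_det_row _ 0) !big_ord_recl big_ord0 /cofactor !det_mx11 !mxE /=.
have -> : lift 0 0 = 1 :> 'I_2 by apply/val_inj.
have -> : lift 1 0 = 0 :> 'I_2 by apply/val_inj.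
by rewrite /= expr0 expr1; ring.
Qed.

Lemma mxtrace2 M : \tr M = M 0 0 + M 1 1.
Proof. by rewrite /mxtrace !big_ord_recl big_ord0 addr0; congr (_ + M _ _); apply/val_inj. Qed.

Lemma ord2P (i : 'I_2) : i = 0 \/ i = 1.
Proof. by case: i => [[|[|//]] Hi]; [left|right]; apply/val_inj. Qed.

Lemma Cayley_Hamilton2 M : M * ((\tr M)%:M - M) = (\det M)%:M.
Proof.
apply/matrixP=> i j; rewrite mulmx2E !mxE det_mx2 mxtrace2.
by case: (ord2P i) => ->; case: (ord2P j) => -> /=; ring.
Qed.

End Matrix2.

Lemma comm_triu2 (R : idomainType) (C W : 'M[R]_2) :
  GRing.comm C W -> W 1 0 = 0 -> W 0 1 != 0 -> C 1 0 = 0.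
Proof.
move=> /(congr1 (fun M : 'M_2 => M 0 0)) /= CW W10 W01.
rewrite !mulmx2E W10 mulr0 addr0 in CW.
have : W 0 1 * C 1 0 = 0 by apply: (addrI (W 0 0 * C 0 0)); rewrite addr0 -CW mulrC.
by move/eqP; rewrite mulf_eq0 (negPf W01) => /eqP.
Qed.

Section SL2.
Variable F : fieldType.

Lemma SL2_unit (M : 'M[F]_2) : SL2 M -> M \is a GRing.unit.
Proof. by move=> detM; rewrite -[_ \is a _]/(M \in unitmx) unitmxE detM unitr1. Qed.

Lemma SL2_inv (M : 'M[F]_2) : SL2 M -> M^-1 = (\tr M)%:M - M.
Proof.
move=> detM; rewrite -[RHS]mul1r -(mulVr (SL2_unit detM)) -mulrA.
by rewrite Cayley_Hamilton2 detM mulr1.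
Qed.

End SL2.

Section StableLine.
Variable F : fieldType.

Lemma rank1_rV m n (V : 'M[F]_(m, n)) :
  \rank V = 1 -> exists2 v : 'rV[F]_n, v != 0 & (v :=: V)%MS.
Proof.
move=> rV1; have [i rowi_neq0 | rows0] := pickP (fun i => row i V != 0).
  exists (row i V) => //; apply/eqmxP.
  by rewrite -mxrank_leqif_eq ?row_sub // rank_rV rowi_neq0 rV1.
suff V0 : V = 0 by rewrite V0 mxrank0 in rV1.
by apply/row_matrixP => i; rewrite row0; apply/eqP/negbFE/rows0.
Qed.

Lemma rV2_basis (v : 'rV[F]_2) : v != 0 -> exists2 P : 'M[F]_2, P \in unitmx & row 0 P = v.
Proof.
move=> v_neq0; pose P j := \matrix_(i < 2, k < 2) if i == 0 then v 0 k else (k == j)%:R.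
have rowP0 j : row 0 (P j) = v by apply/rowP => k; rewrite !mxE.
have [v0 | v0] := eqVneq (v 0 0) 0.
  exists (P 0) => //; rewrite unitmxE det_mx2 !mxE /= v0 mul0r mulr1 sub0r unitrN unitfE.
  apply: contra v_neq0 => /eqP v1; apply/eqP/rowP => k; rewrite mxE.
  by case: (ord2P k) => ->.
by exists (P 1) => //; rewrite unitmxE det_mx2 !mxE /= mulr1 mulr0 subr0 unitfE.
Qed.

Lemma stablemx_row0 (P g : 'M[F]_2) : P \in unitmx ->
  stablemx (row 0 P) g = ((P *m g *m invmx P) 0 1 == 0).
Proof.
move=> P_unit; set M := P *m g *m invmx P.
have PgM : P *m g = M *m P by rewrite mulmxKV.
clearbody M; rewrite -row_mul PgM row_mul.
have -> : row 0 P = 'e_0 *m P by rewrite -row1 -row_mul mul1mx.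
rewrite submxMfree ?row_free_unit //.
apply/sub_rVP/eqP => [[a /rowP/(_ 1)] | M01]; first by rewrite !mxE mulr0.
exists (M 0 0); apply/rowP => k; rewrite !mxE.
by case: (ord2P k) => -> /=; rewrite ?M01 ?mulr1 ?mulr0.
Qed.

Lemma rank1_stable_triu (V : 'M[F]_2) : \rank V = 1 ->
  exists2 Q : 'M[F]_2, Q \is a GRing.unit & forall g, stablemx V g^T = (conjr Q g 1 0 == 0).
Proof.
move=> rV1; have [v v_neq0 vV] := rank1_rV rV1.
have [P P_unit Pv] := rV2_basis v_neq0; rewrite -Pv in vV.
exists P^T; first by rewrite -[_ \is a _]/(P^T \in unitmx) unitmx_tr.
move=> g; rewrite -(eqmx_stable _ vV) stablemx_row0 //.
have -> : conjr P^T g = (P *m g^T *m invmx P)^T.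
  by rewrite /conjr -!mulmxE !trmx_mul trmx_inv !trmxK mulmxA.
by rewrite [_^T 1 0]mxE.
Qed.

End StableLine.

Lemma stable_gen_by (F : fieldType) (gs : seq 'M[F]_2) (V : 'M[F]_2) :
  (forall g, g \in gs -> stablemx V g^T) -> forall g, gen_by gs g -> stablemx V g^T.
Proof.
move=> stV g; elim=> {g} [|g /stV //|g _ stg|g h _ stg _ sth].
- by rewrite trmx1 mulmx1.
- have [g_unit | /invr_out-> //] := boolP (g \is a GRing.unit).
  have gT_unit : g^T \in unitmx by rewrite unitmx_tr.
  have VgT : (V *m g^T :=: V)%MS.
    by apply/eqmxP; rewrite -mxrank_leqif_eq // mxrankMfree // row_free_unit.
  rewrite -[g^-1]/(invmx g) trmx_inv -{1}(eqmxMr _ VgT).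
  by rewrite -mulmxA mulmxV // mulmx1.
- by rewrite -mulmxE trmx_mul mulmxA (submx_trans (submxMr _ sth)).
Qed.

Section Representation.
Variables (F : fieldType) (n : int).
Implicit Types A B X Y : 'M[F]_2.

Lemma rep_M_conjr A B X Y Q : Q \is a GRing.unit ->
  rep_M n A B X Y -> rep_M n (conjr Q A) (conjr Q B) (conjr Q X) (conjr Q Y).
Proof.
move=> Q_unit [[sA sB sX sY] [r1 r2 r3 r4]].
have [uB uY] := (SL2_unit sB, SL2_unit sY).
split; first by split; rewrite /SL2 det_conjr.
by split; rewrite -?rmorphXn -?(rmorphXz _ _ uB) -?(rmorphV _ uY)
  -?(rmorphV _ (SL2_unit sX)) -?rmorphM; [rewrite r1 | rewrite r2 | rewrite r3 | rewrite r4].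
Qed.

Lemma rep_M_scalar A B X (y : F) : rep_M n A B X y%:M -> B = 1 /\ A = y%:M.
Proof.
move=> [[_ sB _ sY] [r1 _ r3 _]].
have [uB uY] := (SL2_unit sB, SL2_unit sY).
have yC (M : 'M_2) : GRing.comm y%:M M by rewrite /GRing.comm -!mulmxE scalar_mxC.
have y2 : y%:M * y%:M = 1 :> 'M_2.
  by rewrite -mulmxE -scalar_mxM -expr2 -det_scalar sY.
have yV : (y%:M)^-1 = y%:M :> 'M_2 by rewrite -[LHS]mulr1 -y2 mulKr.
have eA : A = B ^ n * y%:M by rewrite -yV -r3 mulrA -exprzDr // subrr expr0z mul1r.
have A2 : A ^+ 2 = B ^ (n + n).
  by rewrite expr2 eA -mulrA yC -mulrA y2 mulr1 exprzDr.
have B1 : B = 1.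
  apply: (mulrI (unitrXz (n + n) uB)).
  by rewrite mulr1 -[X in _ = X]A2 r1 mulrDl mul1r [RHS]exprzDr // expr1z.
by rewrite eA B1 exp1rz mul1r.
Qed.

Lemma rep_M_triu A B X Y :
  rep_M n A B X Y -> X 1 0 = 0 -> Y 1 0 = 0 -> A 1 0 = 0 /\ B 1 0 = 0.
Proof.
move=> rep X10 Y10; have [[_ sB sX sY] [r1 r2 _ r4]] := rep.
have YX : Y * X = X * Y^-1 by rewrite -r2 !mulrA mulrV ?mul1r ?SL2_unit.
have YXE i j := congr1 (fun M : 'M_2 => M i j) YX.
have X00 : X 0 0 != 0.
  by apply: contra_eq_neq sX => X0; rewrite det_mx2 X0 X10 !mul0r mulr0 subr0 eq_sym oner_eq0.
have Y11 : Y 1 1 = Y 0 0.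
  have := YXE 0 0; rewrite /= !mulmx2E SL2_inv // !mxE mxtrace2 X10 Y10 /=.
  rewrite mulr0 addr0 mulr1n mulr0n subrr mulr0 addr0 addrAC subrr add0r => e.
  by apply: (mulfI X00); rewrite -e mulrC.
have [Y01 | Y01] := eqVneq (Y 0 1) 0.
  have Yscalar : Y = (Y 0 0)%:M.
    apply/matrixP => i j; rewrite !mxE.
    by case: (ord2P i) => ->; case: (ord2P j) => -> /=; rewrite ?Y01 ?Y10 ?Y11.
  rewrite Yscalar in rep; have [-> ->] := rep_M_scalar rep.
  by rewrite !mxE.
have trX : X 1 1 = - X 0 0.
  have := YXE 0 1; rewrite /= !mulmx2E SL2_inv // !mxE mxtrace2 Y11 /=.
  rewrite mulr0n sub0r mulr1n addrK mulrN [X 0 1 * _]mulrC addrC => /addIr e.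
  by apply: (mulfI Y01); rewrite e mulrN mulrC.
have X2 : X ^+ 2 = -1.
  by rewrite -(mulrV (SL2_unit sX)) SL2_inv // mxtrace2 trX addrN raddf0 sub0r mulrN opprK.
have A2 : A ^+ 2 = Y - (\tr Y)%:M by rewrite r4 X2 mulrN1 SL2_inv // opprB.
have A2_10 : (A ^+ 2) 1 0 = 0 by rewrite A2 !mxE Y10 subr0.
have A2_01 : (A ^+ 2) 0 1 != 0 by rewrite A2 !mxE subr0.
split; apply: comm_triu2 A2_10 A2_01; first exact/commrX/commr_refl.
by rewrite r1; apply/commrXz/commr_refl.
Qed.

End Representation.

Lemma rep_M_irreducible_XY (F : fieldType) (n : int) (A B X Y : 'M[F]_2) :
  rep_M n A B X Y -> irreducible_gen [:: A; B; X; Y] -> irreducible_gen [:: X; Y].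
Proof.
move=> rep irr V stV.
have stX : stablemx V X^T by apply/stV/gen_gen; rewrite !inE eqxx.
have stY : stablemx V Y^T by apply/stV/gen_gen; rewrite !inE eqxx orbT.
have := rank_leq_col V; case rV: (\rank V) => [|[|[|//]]] _; [by left | | by right].
have [Q Q_unit stQ] := rank1_stable_triu rV.
rewrite !stQ in stX stY.
have [A10 B10] := rep_M_triu (rep_M_conjr Q_unit rep) (eqP stX) (eqP stY).
suff /irr : forall g, gen_by [:: A; B; X; Y] g -> stablemx V g^T by rewrite rV; case.
by apply: stable_gen_by => g; rewrite !inE => /or4P[] /eqP->; rewrite ?stQ ?A10 ?B10 ?stX ?stY.
Qed.

Theorem proposition3p8 (R : realType) (n : int) :
  n != 0 -> n != -1 ->
  forall A B X Y : 'M[R[i]]_2,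
    rep_M n A B X Y ->
    irreducible_gen [:: A; B; X; Y] ->
    irreducible_gen [:: X; Y].
Proof.
(* The argument works for every n and over every field. *)
by move=> _ _ A B X Y; apply: rep_M_irreducible_XY.
Qed.
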